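(* Let $s\ge 1$ and let $2\le n_0\le n_1\le\dots\le n_s$ be integers. For $0\le i\le s-1$ let $k_i=\frac{\log n_s}{\log n_i}$, and let $x_0$ be the unique root of the equation $sx-1-\sum_{j=0}^{s-1}x^{\frac{k_j-1}{k_j}}=0$ in the interval $[1,\infty)$. Then $$\frac{s+1}{s}\le x_0<\max(k_0,e+2).$$
   Context: All logarithms are to base 2. *)

From Stdlib Require Import Reals Lra Lia.
Open Scope R_scope.

Fixpoint sumR (f : nat -> R) (m : nat) : R :=
  match m with
  | O => 0
  | S m' => sumR f m' + f m'
  end.

(* k_i = log n_s / log n_i  (base-independent ratio; we use ln) *)
Definition kexp (n : nat -> nat) (s i : nat) : R :=
  ln (INR (n s)) / ln (INR (n i)).

Definition froot (n : nat -> nat) (s : nat) (x : R) : R :=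
  INR s * x - 1 - sumR (fun j => Rpower x ((kexp n s j - 1) / kexp n s j)) s.

(* Since n_0 <= n_j <= n_s, every k_j lies in [1, k_0], so every exponent
   a_j = (k_j - 1) / k_j lies in [0, (k_0 - 1) / k_0].  At a root x >= 1 each
   term x^(a_j) is at least 1, whence s x - 1 >= s.  Conversely, if
   x >= max(k_0, e + 2), put t = ln x / k_0: each term is at most x e^(-t),
   and ln x (x - 1) > x >= k_0 gives (x - 1) t > 1; together with
   e^t >= 1 + t this yields s x - 1 > s x e^(-t), so x is not a root. *)

From Stdlib Require Import Reals Lra Lia.
Open Scope R_scope.

Lemma sumR_le_const (f : nat -> R) (c : R) (m : nat) :
  (forall j, (j < m)%nat -> f j <= c) -> sumR f m <= INR m * c.
Proof.
  induction m as [|m IH]; intros Hf; cbn [sumR].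
  - simpl; lra.
  - rewrite S_INR.
    assert (sumR f m <= INR m * c) by (apply IH; intros j Hj; apply Hf; lia).
    assert (f m <= c) by (apply Hf; lia).
    lra.
Qed.

Lemma sumR_ge_const (f : nat -> R) (c : R) (m : nat) :
  (forall j, (j < m)%nat -> c <= f j) -> INR m * c <= sumR f m.
Proof.
  induction m as [|m IH]; intros Hf; cbn [sumR].
  - simpl; lra.
  - rewrite S_INR.
    assert (INR m * c <= sumR f m) by (apply IH; intros j Hj; apply Hf; lia).
    assert (c <= f m) by (apply Hf; lia).
    lra.
Qed.

Lemma ln_le (x y : R) : 0 < x -> x <= y -> ln x <= ln y.
Proof.
  intros Hx [Hxy | ->]; [left; apply ln_increasing |]; lra.
Qed.

Lemma ln_ge_1_sub_inv (z : R) : 0 < z -> 1 - / z <= ln z.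
Proof.
  intros Hz.
  assert (H := exp_ineq1_le (- ln z)).
  rewrite exp_Ropp, exp_ln in H by exact Hz.
  lra.
Qed.

Lemma ln_mul_pred_gt (y : R) : exp 1 + 2 <= y -> y < ln y * (y - 1).
Proof.
  intros Hy.
  assert (He := exp_pos 1).
  assert (Hln : 2 - exp 1 / y <= ln y).
  { assert (H := ln_ge_1_sub_inv (y / exp 1) ltac:(apply Rdiv_lt_0_compat; lra)).
    unfold Rdiv in *.
    rewrite ln_mult, ln_Rinv, ln_exp, Rinv_mult, Rinv_inv in H
      by (try apply Rinv_0_lt_compat; lra).
    rewrite Rmult_comm; lra. }
  assert (exp 1 / y * y = exp 1) by (field; lra).
  assert (0 < exp 1 / y) by (apply Rdiv_lt_0_compat; lra).
  nra.
Qed.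

Lemma Rdiv_bounds_of_le (a b c : R) : 0 < a <= b -> b <= c -> 1 <= c / b <= c / a.
Proof.
  intros [Ha Hab] Hbc.
  split.
  - apply Rmult_le_reg_r with b; [lra |].
    unfold Rdiv; rewrite Rmult_assoc, Rinv_l; lra.
  - unfold Rdiv; apply Rmult_le_compat_l; [lra |].
    apply Rinv_le_contravar; lra.
Qed.

Lemma pred_div_self_bounds (k K : R) : 1 <= k <= K -> 0 <= (k - 1) / k <= (K - 1) / K.
Proof.
  intros [Hk HkK].
  replace ((k - 1) / k) with (1 - / k) by (field; lra).
  replace ((K - 1) / K) with (1 - / K) by (field; lra).
  assert (/ k <= 1) by (rewrite <- Rinv_1; apply Rinv_le_contravar; lra).
  assert (/ K <= / k) by (apply Rinv_le_contravar; lra).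
  lra.
Qed.

Lemma Rpower_pred_div_lt (s K y : R) :
  1 <= s -> 1 <= K <= y -> exp 1 + 2 <= y ->
  s * Rpower y ((K - 1) / K) < s * y - 1.
Proof.
  intros Hs [HK HKy] Hy.
  assert (He := exp_pos 1).
  assert (Hgap := ln_mul_pred_gt y Hy).
  set (t := ln y / K).
  assert (HtK : t * K = ln y) by (unfold t; field; lra).
  assert (Hln : 0 < ln y) by nra.
  assert (Ht : 0 < t) by (unfold t; apply Rdiv_lt_0_compat; lra).
  assert (Hty : 1 < t * (y - 1)) by nra.
  assert (Hpow : Rpower y ((K - 1) / K) = y / exp t).
  { unfold Rpower, Rdiv at 2.
    replace ((K - 1) / K * ln y) with (ln y + - t) by (unfold t; field; lra).
    rewrite exp_plus, exp_ln, exp_Ropp by lra.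
    reflexivity. }
  rewrite Hpow.
  set (E := exp t).
  assert (HE : 1 + t <= E) by apply exp_ineq1_le.
  assert (HyE : E < y * (E - 1)) by nra.
  assert (HsyE : E < s * y * (E - 1)) by nra.
  assert (s * (y / E) * E = s * y) by (unfold E; field; apply Rgt_not_eq, exp_pos).
  nra.
Qed.

Section RootBounds.

Variables (s : nat) (n : nat -> nat).
Hypothesis hn0 : (2 <= n 0)%nat.
Hypothesis hmono : forall i : nat, (i < s)%nat -> (n i <= n (S i))%nat.

Lemma n_le_mono (i j : nat) : (i <= j)%nat -> (j <= s)%nat -> (n i <= n j)%nat.
Proof.
  intros Hij. induction Hij as [| j Hij IH]; intros Hj.
  - lia.
  - assert (n j <= n (S j))%nat by (apply hmono; lia).
    assert (n i <= n j)%nat by (apply IH; lia).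
    lia.
Qed.

Lemma kexp_bounds (j : nat) : (j <= s)%nat -> 1 <= kexp n s j <= kexp n s 0.
Proof.
  intros Hj.
  assert (H2 : 2 <= INR (n 0%nat)) by (apply (le_INR 2); exact hn0).
  assert (H0j : INR (n 0%nat) <= INR (n j)) by (apply le_INR, n_le_mono; lia).
  assert (Hjs : INR (n j) <= INR (n s)) by (apply le_INR, n_le_mono; lia).
  apply Rdiv_bounds_of_le.
  - split.
    + rewrite <- ln_1; apply ln_increasing; lra.
    + apply ln_le; lra.
  - apply ln_le; lra.
Qed.

Lemma froot_le (x : R) : 1 <= x -> froot n s x <= INR s * x - 1 - INR s.
Proof.
  intros Hx.
  enough (INR s * 1 <= sumR (fun j => Rpower x ((kexp n s j - 1) / kexp n s j)) s)
    by (unfold froot; lra).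
  apply sumR_ge_const; intros j Hj.
  apply Rle_trans with (Rpower x 0); [rewrite Rpower_O; lra |].
  apply Rle_Rpower; [exact Hx |].
  apply (pred_div_self_bounds _ _ (kexp_bounds j ltac:(lia))).
Qed.

Lemma froot_pos (y : R) :
  (1 <= s)%nat -> Rmax (kexp n s 0) (exp 1 + 2) <= y -> 0 < froot n s y.
Proof.
  intros Hs Hy.
  set (K := kexp n s 0) in Hy.
  assert (HKy : K <= y) by (eapply Rle_trans; [apply Rmax_l | exact Hy]).
  assert (Hey : exp 1 + 2 <= y) by (eapply Rle_trans; [apply Rmax_r | exact Hy]).
  assert (HK : 1 <= K) by apply (kexp_bounds 0 ltac:(lia)).
  assert (Hsum : sumR (fun j => Rpower y ((kexp n s j - 1) / kexp n s j)) s
                 <= INR s * Rpower y ((K - 1) / K)).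
  { apply sumR_le_const; intros j Hj.
    apply Rle_Rpower; [lra |].
    apply (pred_div_self_bounds _ _ (kexp_bounds j ltac:(lia))). }
  assert (HsR : 1 <= INR s) by (apply (le_INR 1); exact Hs).
  assert (Hgap := Rpower_pred_div_lt (INR s) K y HsR ltac:(lra) Hey).
  unfold froot; lra.
Qed.

End RootBounds.

Theorem lemma6p2 (s : nat) (n : nat -> nat)
  (hs : (1 <= s)%nat)
  (hn0 : (2 <= n 0%nat)%nat)
  (hmono : forall i : nat, (i < s)%nat -> (n i <= n (S i))%nat)
  (x0 : R) (hx0 : 1 <= x0) (hroot : froot n s x0 = 0)
  (huniq : forall y : R, 1 <= y -> froot n s y = 0 -> y = x0) :
  (INR s + 1) / INR s <= x0 /\ x0 < Rmax (kexp n s 0) (exp 1 + 2).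
Proof.
  clear huniq.
  assert (Hs : 1 <= INR s) by (apply (le_INR 1); exact hs).
  split.
  - assert (H := froot_le s n hn0 hmono x0 hx0).
    apply Rmult_le_reg_r with (INR s); [lra |].
    unfold Rdiv; rewrite Rmult_assoc, Rinv_l; lra.
  - apply Rnot_le_lt; intros Hbig.
    assert (H := froot_pos s n hn0 hmono x0 hs Hbig).
    lra.
Qed.
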